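(* Fix $\beta>2$ and let $F_\beta(\mathbf{x},r)$, $r_1^\beta$, $r_2^\beta$, $\mathbf{m}_0^\beta(r)$, $\boldsymbol{\sigma}_0^\beta(r)$, $\mathbf{p}^\beta(r)$ be as in the context. Then: (1) $\mathbf{m}_0^\beta(r)$ is a local minimum of $F_\beta(\cdot,r)$ for all $r\in(0,r_2^\beta)$; (2) $\boldsymbol{\sigma}_0^\beta(r)$ is a saddle point of $F_\beta(\cdot,r)$ for all $r>0$; (3) $\mathbf{p}^\beta(r)$ is a local maximum of $F_\beta(\cdot,r)$ for all $r\in(0,r_1^\beta)$, and a saddle point of $F_\beta(\cdot,r)$ for all $r\in(r_1^\beta,r_2^\beta)$.
   Context: $\Xi=\{(x_1,x_2): x_1,x_2\ge0,\ x_1+x_2\le1\}$, $x_0=1-x_1-x_2$, $\mathbf{v}_k=(\cos(2\pi k/3),\sin(2\pi k/3))$, and for $r\ge0$ $$F_\beta(\mathbf{x},r)=-\frac12\Big|\sum_{k=0}^2x_k\mathbf{v}_k\Big|^2+\frac1\beta\sum_{k=0}^2x_k\log(3x_k)+r\,x_0-\frac r2(x_1+x_2)$$ (Potts potential with external field of magnitude $r$ and angle $\pi$). Let $h(t)=-3t(1-2t)\log\frac{1-2t}{t}-3t+1$ on $(0,1/2)$, $f_r(t)=\frac{2}{3(1-r-3t)}\log\frac{1-2t}{t}$, $k_r=(1-r)/3$; for $0<r<1$, $m_0(r)$ is the unique solution in $(0,k_r)$ of $h(t)=r$ (equivalently of $f_r'(t)=0$), and $r\mapsto f_r(m_0(r))$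 is increasing on $(0,1)$ with limit $\infty$ as $r\uparrow 1$. Let $r_2^\beta$ be the unique $r\in(0,1)$ with $f_r(m_0(r))=\beta$, and $r_1^\beta=1-\frac2\beta-\frac{2}{3\beta}\log\big(\frac{3\beta}2-2\big)$ (one has $r_1^\beta<r_2^\beta$). For $r\in(0,r_2^\beta)$, the equation $f_r(t)=\beta$ has exactly three solutions $p_\beta(r)<u_\beta(r)<q_\beta(r)$ in $(0,1/2)$, with $p_\beta(r)\in(0,m_0(r))$, $u_\beta(r)\in(m_0(r),k_r)$, $q_\beta(r)\in(1/3,1/2)$; for every $r>0$ the equation $f_r(t)=\beta$ has exactly one solution $q_\beta(r)$ in $(1/3,1/2)$. Define $\mathbf{m}_0^\beta(r)=(p_\beta(r),p_\beta(r))$, $\mathbf{p}^\beta(r)=(u_\beta(r),u_\beta(r))$ for $r\in(0,r_2^\beta)$, and $\boldsymbol{\sigma}_0^\beta(r)=(q_\beta(r),q_\beta(r))$ for $r>0$; these are critical points of $F_\beta(\cdot,r)$. A saddle point is a critical point where the Hessian (in $(x_1,x_2)$) has one positive and one negative eigenvalue. *)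

From Stdlib Require Import Reals Lra.
From Coquelicot Require Import Coquelicot.
Open Scope R_scope.

Definition in_Xi (x1 x2 : R) : Prop := 0 <= x1 /\ 0 <= x2 /\ x1 + x2 <= 1.

Definition vx (k : R) : R := cos (2 * PI * k / 3).
Definition vy (k : R) : R := sin (2 * PI * k / 3).

(* Potts potential with external field of magnitude r and angle pi.
   Convention: Stdlib's ln 0 = 0, so x log(3x) = 0 at x = 0 (the usual 0 log 0 = 0). *)
Definition Fbeta (beta r x1 x2 : R) : R :=
  let x0 := 1 - x1 - x2 in
  let sx := x0 * vx 0 + x1 * vx 1 + x2 * vx 2 in
  let sy := x0 * vy 0 + x1 * vy 1 + x2 * vy 2 in
  - / 2 * (sx ^ 2 + sy ^ 2)
  + / beta * (x0 * ln (3 * x0) + x1 * ln (3 * x1) + x2 * ln (3 * x2))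
  + r * x0 - r / 2 * (x1 + x2).

Definition hfun (t : R) : R :=
  - 3 * t * (1 - 2 * t) * ln ((1 - 2 * t) / t) - 3 * t + 1.

Definition ffun (r t : R) : R :=
  2 / (3 * (1 - r - 3 * t)) * ln ((1 - 2 * t) / t).

Definition kr (r : R) : R := (1 - r) / 3.

(* m is m_0(r): the (unique) solution in (0, k_r) of h(t) = r *)
Definition is_m0 (r m : R) : Prop := 0 < m < kr r /\ hfun m = r.

(* r2 is r_2^beta: the (unique) r in (0,1) with f_r(m_0(r)) = beta *)
Definition is_r2 (beta r2 : R) : Prop :=
  0 < r2 < 1 /\ exists m, is_m0 r2 m /\ ffun r2 m = beta.

Definition r1 (beta : R) : R :=
  1 - 2 / beta - 2 / (3 * beta) * ln (3 * beta / 2 - 2).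

Definition local_min_Xi (g : R -> R -> R) (a b : R) : Prop :=
  in_Xi a b /\ exists eps, 0 < eps /\
    forall y1 y2, in_Xi y1 y2 -> (y1 - a) ^ 2 + (y2 - b) ^ 2 < eps ^ 2 ->
      g a b <= g y1 y2.

Definition local_max_Xi (g : R -> R -> R) (a b : R) : Prop :=
  in_Xi a b /\ exists eps, 0 < eps /\
    forall y1 y2, in_Xi y1 y2 -> (y1 - a) ^ 2 + (y2 - b) ^ 2 < eps ^ 2 ->
      g y1 y2 <= g a b.

Definition d1 (g : R -> R -> R) (a b : R) : R := Derive (fun t => g t b) a.
Definition d2 (g : R -> R -> R) (a b : R) : R := Derive (fun s => g a s) b.

Definition critical (g : R -> R -> R) (a b : R) : Prop :=
  is_derive (fun t => g t b) a 0 /\ is_derive (fun s => g a s) b 0.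

Definition hess11 g a b := d1 (d1 g) a b.
Definition hess12 g a b := d2 (d1 g) a b.
Definition hess21 g a b := d1 (d2 g) a b.
Definition hess22 g a b := d2 (d2 g) a b.

Definition eigenvalue2 (h11 h12 h21 h22 l : R) : Prop :=
  exists v1 v2, (v1 <> 0 \/ v2 <> 0) /\
    h11 * v1 + h12 * v2 = l * v1 /\ h21 * v1 + h22 * v2 = l * v2.

Definition saddle (g : R -> R -> R) (a b : R) : Prop :=
  in_Xi a b /\ critical g a b /\
  (exists l, 0 < l /\ eigenvalue2 (hess11 g a b) (hess12 g a b) (hess21 g a b) (hess22 g a b) l) /\
  (exists l, l < 0 /\ eigenvalue2 (hess11 g a b) (hess12 g a b) (hess21 g a b) (hess22 g a b) l).

From Pilot Require Import Defs.
From Stdlib Require Import Reals Lra.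
From Coquelicot Require Import Coquelicot.
Open Scope R_scope.

(* Along the diagonal the Hessian of F_beta at (t,t) has the eigenvectors (1,1) and (1,-1),
   with eigenvalues eig_sym and eig_anti, so every claim reduces to the signs of these two
   numbers; a second-order expansion in which each entropy term is compared with its
   quadratic approximation up to a factor 1 +- eta upgrades definiteness to a genuine local
   extremum.  At a root t of f_r(t) = beta, eig_sym has the sign of (h(t) - r) / log((1-2t)/t),
   which the monotonicity of h settles for the three roots, while eig_anti changes sign exactly
   at t = 2/(3 beta).  Solving f_r(t) = beta for r gives r = rcrit(t), whose derivative is
   (2/3) eig_sym and whose value at 2/(3 beta) is r_1^beta; hence the middle root lies above
   2/(3 beta) when r < r_1^beta and below it when r > r_1^beta. *)

Lemma incr_of_derive_pos (f f' : R -> R) (a b : R) : a < b ->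
  (forall c, a <= c <= b -> is_derive f c (f' c)) ->
  (forall c, a < c < b -> 0 < f' c) -> f a < f b.
Proof.
  intros Hab Hd Hpos.
  destruct (MVT_cor2 f f' a b Hab) as [c [E Hc]].
  { intros c Hc. apply is_derive_Reals, Hd, Hc. }
  specialize (Hpos c Hc). nra.
Qed.

Lemma decr_of_derive_neg (f f' : R -> R) (a b : R) : a < b ->
  (forall c, a <= c <= b -> is_derive f c (f' c)) ->
  (forall c, a < c < b -> f' c < 0) -> f b < f a.
Proof.
  intros Hab Hd Hneg.
  enough (- f a < - f b) by lra.
  apply (incr_of_derive_pos (fun x => - f x) (fun x => - f' x) a b Hab).
  - intros c Hc. apply (is_derive_opp f), Hd, Hc.
  - intros c Hc. specialize (Hneg c Hc). lra.
Qed.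

Lemma le_of_derive_nonneg (f f' : R -> R) (a b : R) : a <= b ->
  (forall c, a <= c <= b -> is_derive f c (f' c)) ->
  (forall c, a < c < b -> 0 <= f' c) -> f a <= f b.
Proof.
  intros Hab Hd Hnn.
  destruct (Req_dec a b) as [<-|Hne]; [lra|].
  destruct (MVT_cor2 f f' a b ltac:(lra)) as [c [E Hc]].
  { intros c Hc. apply is_derive_Reals, Hd, Hc. }
  specialize (Hnn c Hc). nra.
Qed.

Lemma ln_lt_sub1 (x : R) : 0 < x -> x <> 1 -> ln x < x - 1.
Proof.
  intros Hx Hx1.
  pose proof (exp_ineq1 (ln x) (ln_neq_0 x Hx1 Hx)) as H.
  rewrite exp_ln in H by exact Hx. lra.
Qed.

Lemma ln_le_sub1 (x : R) : 0 < x -> ln x <= x - 1.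
Proof.
  intros Hx. destruct (Req_dec x 1) as [->|Hx1].
  - rewrite ln_1. lra.
  - left. now apply ln_lt_sub1.
Qed.

Definition bregman_xlnx (w : R) : R := w * ln w - w + 1.

Lemma bregman_xlnx_half_square (w : R) : 0 < w ->
  (w <= 1 -> (w - 1) ^ 2 / 2 <= bregman_xlnx w) /\
  (1 <= w -> bregman_xlnx w <= (w - 1) ^ 2 / 2).
Proof.
  intros Hw.
  set (k v := (v - 1) ^ 2 / 2 - bregman_xlnx v).
  assert (Hk : forall a b, 0 < a -> a <= b -> k a <= k b).
  { intros a b Ha Hab.
    apply (le_of_derive_nonneg k (fun v => v - 1 - ln v)); auto.
    - intros c Hc. unfold k, bregman_xlnx. auto_derive; [lra|]. field. lra.
    - intros c Hc. pose proof (ln_le_sub1 c ltac:(lra)). lra. }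
  assert (Hk1 : k 1 = 0) by (unfold k, bregman_xlnx; rewrite ln_1; field).
  split; intro H.
  - pose proof (Hk w 1 Hw H). unfold k in *. lra.
  - pose proof (Hk 1 w ltac:(lra) H). unfold k in *. lra.
Qed.

Lemma bregman_xlnx_harmonic (w : R) : 0 < w ->
  (1 <= w -> (w - 1) ^ 2 / (w + 1) <= bregman_xlnx w) /\
  (w <= 1 -> bregman_xlnx w <= (w - 1) ^ 2 / (w + 1)).
Proof.
  intros Hw.
  set (g v := ln v - 2 * (v - 1) / (v + 1)).
  assert (Hg : forall a b, 0 < a -> a <= b -> g a <= g b).
  { intros a b Ha Hab.
    apply (le_of_derive_nonneg g (fun v => (v - 1) ^ 2 / (v * (v + 1) ^ 2))); auto.
    - intros c Hc. unfold g. auto_derive; [lra|]. field. lra.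
    - intros c Hc. apply Rmult_le_pos; [apply pow2_ge_0|].
      left. apply Rinv_0_lt_compat, Rmult_lt_0_compat; [lra|]. apply pow_lt. lra. }
  assert (Hg1 : g 1 = 0) by (unfold g; rewrite ln_1; field).
  assert (E : bregman_xlnx w - (w - 1) ^ 2 / (w + 1) = w * g w)
    by (unfold g, bregman_xlnx; field; lra).
  split; intro H.
  - pose proof (Hg 1 w ltac:(lra) H). assert (0 <= w * g w) by (apply Rmult_le_pos; lra). lra.
  - pose proof (Hg w 1 Hw H). assert (0 <= w * - g w) by (apply Rmult_le_pos; lra). lra.
Qed.

Lemma bregman_xlnx_quadratic (eta w : R) : 0 <= eta < 1 -> Rabs (w - 1) <= eta ->
  (w - 1) ^ 2 <= 2 * (1 + eta) * bregman_xlnx w /\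
  2 * (1 - eta) * bregman_xlnx w <= (w - 1) ^ 2.
Proof.
  intros He Hw. apply Rabs_le_between in Hw.
  destruct (bregman_xlnx_half_square w ltac:(lra)) as [Hs1 Hs2].
  destruct (bregman_xlnx_harmonic w ltac:(lra)) as [Hh1 Hh2].
  assert (Hsq : 0 <= (w - 1) ^ 2) by apply pow2_ge_0.
  destruct (Rle_dec w 1) as [H|H].
  - specialize (Hs1 H). specialize (Hh2 H).
    assert (bregman_xlnx w * (w + 1) <= (w - 1) ^ 2).
    { apply Rmult_le_reg_r with (/ (w + 1)); [apply Rinv_0_lt_compat; lra|].
      rewrite Rmult_assoc, Rinv_r by lra. lra. }
    split; nra.
  - specialize (Hs2 ltac:(lra)). specialize (Hh1 ltac:(lra)).
    assert ((w - 1) ^ 2 <= bregman_xlnx w * (w + 1)).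
    { apply Rmult_le_reg_r with (/ (w + 1)); [apply Rinv_0_lt_compat; lra|].
      rewrite Rmult_assoc, Rinv_r by lra. lra. }
    split; nra.
Qed.

Lemma scaled_bregman_xlnx_quadratic (eta x y : R) : 0 <= eta < 1 -> 0 < x ->
  Rabs (y - x) <= eta * x ->
  (y - x) ^ 2 / x <= 2 * (1 + eta) * (x * bregman_xlnx (y / x)) /\
  2 * (1 - eta) * (x * bregman_xlnx (y / x)) <= (y - x) ^ 2 / x.
Proof.
  intros He Hx Hyx.
  assert (Hw : Rabs (y / x - 1) <= eta).
  { replace (y / x - 1) with ((y - x) / x) by (field; lra).
    unfold Rdiv. rewrite Rabs_mult, Rabs_inv, (Rabs_pos_eq x) by lra.
    apply Rmult_le_reg_r with x; [lra|]. rewrite Rmult_assoc, Rinv_l; lra. }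
  destruct (bregman_xlnx_quadratic eta (y / x) He Hw) as [Hl Hu].
  replace ((y - x) ^ 2 / x) with (x * (y / x - 1) ^ 2) by (field; lra).
  split; nra.
Qed.

Lemma vx0 : vx 0 = 1.
Proof. unfold vx. replace (2 * PI * 0 / 3) with 0 by field. apply cos_0. Qed.
Lemma vy0 : vy 0 = 0.
Proof. unfold vy. replace (2 * PI * 0 / 3) with 0 by field. apply sin_0. Qed.
Lemma vx1 : vx 1 = - 1 / 2.
Proof. unfold vx. replace (2 * PI * 1 / 3) with (2 * (PI / 3)) by field. apply cos_2PI3. Qed.
Lemma vy1 : vy 1 = sqrt 3 / 2.
Proof. unfold vy. replace (2 * PI * 1 / 3) with (2 * (PI / 3)) by field. apply sin_2PI3. Qed.
Lemma vx2 : vx 2 = - 1 / 2.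
Proof.
  unfold vx. replace (2 * PI * 2 / 3) with (PI / 3 + PI) by field.
  rewrite neg_cos, cos_PI3. field.
Qed.
Lemma vy2 : vy 2 = - (sqrt 3 / 2).
Proof.
  unfold vy. replace (2 * PI * 2 / 3) with (PI / 3 + PI) by field.
  now rewrite neg_sin, sin_PI3.
Qed.

Definition xln3x (x : R) : R := x * ln (3 * x).

Definition Fpotts (beta r x1 x2 : R) : R :=
  - / 2 * ((1 - 3 / 2 * (x1 + x2)) ^ 2 + 3 / 4 * (x1 - x2) ^ 2)
  + / beta * (xln3x (1 - x1 - x2) + xln3x x1 + xln3x x2)
  + r * (1 - x1 - x2) - r / 2 * (x1 + x2).

Lemma Fbeta_Fpotts (beta r x1 x2 : R) : Fbeta beta r x1 x2 = Fpotts beta r x1 x2.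
Proof.
  unfold Fbeta, Fpotts, xln3x. rewrite vx0, vy0, vx1, vy1, vx2, vy2.
  assert (H3 : sqrt 3 * sqrt 3 = 3) by (apply sqrt_sqrt; lra).
  replace (((1 - x1 - x2) * 0 + x1 * (sqrt 3 / 2) + x2 * (- (sqrt 3 / 2))) ^ 2)
    with (sqrt 3 * sqrt 3 / 4 * (x1 - x2) ^ 2) by field.
  rewrite H3. generalize (/ beta). intro. field.
Qed.

Lemma Fpotts_swap (beta r x1 x2 : R) : Fpotts beta r x1 x2 = Fpotts beta r x2 x1.
Proof.
  unfold Fpotts. replace (1 - x2 - x1) with (1 - x1 - x2) by ring.
  generalize (/ beta). intro. ring.
Qed.

Definition grad1 (beta r x1 x2 : R) : R :=
  3 / 2 - 3 * x1 - 3 / 2 * x2 + / beta * (ln (3 * x1) - ln (3 * (1 - x1 - x2))) - 3 * r / 2.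

Lemma Fbeta_derive1 (beta r x1 x2 : R) : 0 < x1 -> 0 < x2 -> x1 + x2 < 1 ->
  is_derive (fun t => Fbeta beta r t x2) x1 (grad1 beta r x1 x2).
Proof.
  intros H1 H2 H12.
  apply is_derive_ext with (fun t => Fpotts beta r t x2).
  { intro t. now rewrite Fbeta_Fpotts. }
  unfold Fpotts, xln3x. auto_derive; [repeat split; lra|].
  unfold grad1. replace (1 + - x1 + - x2) with (1 - x1 - x2) by ring.
  generalize (/ beta). intro. field. lra.
Qed.

Lemma Fbeta_derive2 (beta r x1 x2 : R) : 0 < x1 -> 0 < x2 -> x1 + x2 < 1 ->
  is_derive (fun s => Fbeta beta r x1 s) x2 (grad1 beta r x2 x1).
Proof.
  intros H1 H2 H12.
  apply is_derive_ext with (fun s => Fbeta beta r s x1).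
  { intro s. now rewrite !Fbeta_Fpotts, Fpotts_swap. }
  apply Fbeta_derive1; lra.
Qed.

Lemma d1_Fbeta (beta r a b : R) : 0 < a -> 0 < b -> a + b < 1 ->
  Defs.d1 (Fbeta beta r) a b = grad1 beta r a b.
Proof. intros. apply is_derive_unique, Fbeta_derive1; assumption. Qed.

Lemma d2_Fbeta (beta r a b : R) : 0 < a -> 0 < b -> a + b < 1 ->
  Defs.d2 (Fbeta beta r) a b = grad1 beta r b a.
Proof. intros. apply is_derive_unique, Fbeta_derive2; assumption. Qed.

Lemma Derive_on_interval (f g : R -> R) (lo hi x l : R) : lo < x < hi ->
  (forall y, lo < y < hi -> f y = g y) -> is_derive g x l -> Derive f x = l.
Proof.
  intros Hx Hfg Hg. apply is_derive_unique, is_derive_ext_loc with g; [|exact Hg].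
  apply locally_interval with lo hi; simpl; try lra.
  intros y Hlo Hhi. symmetry. apply Hfg. lra.
Qed.

Lemma hess11_Fbeta (beta r a b : R) : 0 < a -> 0 < b -> a + b < 1 ->
  hess11 (Fbeta beta r) a b = -3 + / beta * (/ a + / (1 - a - b)).
Proof.
  intros Ha Hb Hab. unfold hess11, Defs.d1 at 1.
  apply (Derive_on_interval _ (fun t => grad1 beta r t b) 0 (1 - b)); [lra| |].
  - intros y Hy. apply d1_Fbeta; lra.
  - unfold grad1. auto_derive; [repeat split; lra|].
    replace (1 + - a + - b) with (1 - a - b) by ring. generalize (/ beta). intro. field. lra.
Qed.

Lemma hess12_Fbeta (beta r a b : R) : 0 < a -> 0 < b -> a + b < 1 ->
  hess12 (Fbeta beta r) a b = -3 / 2 + / beta * / (1 - a - b).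
Proof.
  intros Ha Hb Hab. unfold hess12, Defs.d2 at 1.
  apply (Derive_on_interval _ (fun s => grad1 beta r a s) 0 (1 - a)); [lra| |].
  - intros y Hy. apply d1_Fbeta; lra.
  - unfold grad1. auto_derive; [repeat split; lra|].
    replace (1 + - a + - b) with (1 - a - b) by ring. generalize (/ beta). intro. field. lra.
Qed.

Lemma hess21_Fbeta (beta r a b : R) : 0 < a -> 0 < b -> a + b < 1 ->
  hess21 (Fbeta beta r) a b = -3 / 2 + / beta * / (1 - a - b).
Proof.
  intros Ha Hb Hab. unfold hess21, Defs.d1 at 1.
  apply (Derive_on_interval _ (fun t => grad1 beta r b t) 0 (1 - b)); [lra| |].
  - intros y Hy. apply d2_Fbeta; lra.
  - unfold grad1. auto_derive; [repeat split; lra|].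
    replace (1 + - b + - a) with (1 - a - b) by ring. generalize (/ beta). intro. field. lra.
Qed.

Lemma hess22_Fbeta (beta r a b : R) : 0 < a -> 0 < b -> a + b < 1 ->
  hess22 (Fbeta beta r) a b = -3 + / beta * (/ b + / (1 - a - b)).
Proof.
  intros Ha Hb Hab. unfold hess22, Defs.d2 at 1.
  apply (Derive_on_interval _ (fun s => grad1 beta r s a) 0 (1 - a)); [lra| |].
  - intros y Hy. apply d2_Fbeta; lra.
  - unfold grad1. auto_derive; [repeat split; lra|].
    replace (1 + - b + - a) with (1 - a - b) by ring. generalize (/ beta). intro. field. lra.
Qed.

Definition eig_sym (beta t : R) : R := -9 / 2 + / beta * / (t * (1 - 2 * t)).
Definition eig_anti (beta t : R) : R := -3 / 2 + / beta * / t.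

Lemma eigenvalue2_eig_sym (beta r t : R) : 0 < t < 1 / 2 ->
  eigenvalue2 (hess11 (Fbeta beta r) t t) (hess12 (Fbeta beta r) t t)
    (hess21 (Fbeta beta r) t t) (hess22 (Fbeta beta r) t t) (eig_sym beta t).
Proof.
  intros Ht. rewrite hess11_Fbeta, hess12_Fbeta, hess21_Fbeta, hess22_Fbeta by lra.
  exists 1, 1. unfold eig_sym. generalize (/ beta). intro.
  split; [left; lra | split; field; lra].
Qed.

Lemma eigenvalue2_eig_anti (beta r t : R) : 0 < t < 1 / 2 ->
  eigenvalue2 (hess11 (Fbeta beta r) t t) (hess12 (Fbeta beta r) t t)
    (hess21 (Fbeta beta r) t t) (hess22 (Fbeta beta r) t t) (eig_anti beta t).
Proof.
  intros Ht. rewrite hess11_Fbeta, hess12_Fbeta, hess21_Fbeta, hess22_Fbeta by lra.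
  exists 1, (-1). unfold eig_anti. generalize (/ beta). intro.
  split; [left; lra | split; field; lra].
Qed.

Lemma saddle_diag (beta r t : R) : 0 < t < 1 / 2 -> grad1 beta r t t = 0 ->
  eig_sym beta t * eig_anti beta t < 0 -> saddle (Fbeta beta r) t t.
Proof.
  intros Ht Hc Hprod.
  pose proof (eigenvalue2_eig_sym beta r t Ht) as Es.
  pose proof (eigenvalue2_eig_anti beta r t Ht) as Ea.
  split; [unfold in_Xi; lra|].
  split; [split; rewrite <- Hc; [apply Fbeta_derive1 | apply Fbeta_derive2]; lra|].
  destruct (Rlt_le_dec 0 (eig_sym beta t)) as [Hs|Hs].
  - assert (eig_anti beta t < 0) by nra. split; eexists; split; eassumption.
  - assert (0 < eig_anti beta t) by nra.
    assert (eig_sym beta t < 0) by nra.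
    split; eexists; split; eassumption.
Qed.

Lemma Fpotts_sub_diag (beta r t y1 y2 : R) : 0 < t < 1 / 2 ->
  0 < y1 -> 0 < y2 -> y1 + y2 < 1 ->
  Fpotts beta r y1 y2 - Fpotts beta r t t =
  - 3 / 4 * ((y1 - t) ^ 2 + (y2 - t) ^ 2 + (y1 + y2 - 2 * t) ^ 2)
  + / beta * ((1 - 2 * t) * bregman_xlnx ((1 - y1 - y2) / (1 - 2 * t))
              + t * bregman_xlnx (y1 / t) + t * bregman_xlnx (y2 / t))
  + (y1 + y2 - 2 * t) * grad1 beta r t t.
Proof.
  intros Ht Hy1 Hy2 Hy.
  unfold Fpotts, xln3x, bregman_xlnx, grad1.
  rewrite (ln_div (1 - y1 - y2)), (ln_div y1), (ln_div y2) by lra.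
  rewrite (ln_mult 3 (1 - y1 - y2)), (ln_mult 3 y1), (ln_mult 3 y2), (ln_mult 3 t),
    (ln_mult 3 (1 - t - t)) by lra.
  replace (1 - t - t) with (1 - 2 * t) by ring.
  generalize (/ beta). intro. field. lra.
Qed.

Definition diag_form (beta t k d1 d2 : R) : R :=
  (d1 + d2) ^ 2 * (eig_sym beta t - 9 / 2 * (k - 1))
  + (d1 - d2) ^ 2 * (eig_anti beta t - 3 / 2 * (k - 1)).

Lemma Fpotts_near_diag (beta r t eta y1 y2 : R) : 0 < beta -> 0 < t < 1 / 3 ->
  0 <= eta <= 1 / 2 -> grad1 beta r t t = 0 ->
  Rabs (y1 - t) < eta * t / 2 -> Rabs (y2 - t) < eta * t / 2 ->
  diag_form beta t (1 + eta) (y1 - t) (y2 - t)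
    <= 4 * (1 + eta) * (Fpotts beta r y1 y2 - Fpotts beta r t t) /\
  4 * (1 - eta) * (Fpotts beta r y1 y2 - Fpotts beta r t t)
    <= diag_form beta t (1 - eta) (y1 - t) (y2 - t).
Proof.
  intros Hb Ht He Hc H1 H2.
  apply Rabs_lt_between in H1, H2.
  assert (Het : eta * t <= t / 2) by nra.
  assert (Het' : eta * t <= eta * (1 - 2 * t)) by nra.
  destruct (scaled_bregman_xlnx_quadratic eta (1 - 2 * t) (1 - y1 - y2)) as [L0 U0];
    [lra | lra | apply Rabs_le_between; nra |].
  destruct (scaled_bregman_xlnx_quadratic eta t y1) as [L1 U1];
    [lra | lra | apply Rabs_le_between; nra |].
  destruct (scaled_bregman_xlnx_quadratic eta t y2) as [L2 U2];
    [lra | lra | apply Rabs_le_between; nra |].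
  rewrite Fpotts_sub_diag, Hc by nra.
  set (A := (1 - 2 * t) * bregman_xlnx ((1 - y1 - y2) / (1 - 2 * t))
            + t * bregman_xlnx (y1 / t) + t * bregman_xlnx (y2 / t)).
  set (T := (y1 - t) ^ 2 / t + (y2 - t) ^ 2 / t + (y1 + y2 - 2 * t) ^ 2 / (1 - 2 * t)).
  assert (HT : T <= 2 * (1 + eta) * A /\ 2 * (1 - eta) * A <= T).
  { unfold T, A. replace ((y1 + y2 - 2 * t) ^ 2) with ((1 - y1 - y2 - (1 - 2 * t)) ^ 2)
      by ring. lra. }
  assert (Hform : forall k, diag_form beta t k (y1 - t) (y2 - t) =
    2 * / beta * T - 3 * k * ((y1 - t) ^ 2 + (y2 - t) ^ 2 + (y1 + y2 - 2 * t) ^ 2)).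
  { intro k. unfold diag_form, eig_sym, eig_anti, T. field. lra. }
  rewrite !Hform.
  pose proof (Rinv_0_lt_compat beta Hb). split; nra.
Qed.

Lemma Rabs_lt_of_sum_sq (a b e : R) : 0 < e -> a ^ 2 + b ^ 2 < e ^ 2 -> Rabs a < e.
Proof. intros He H. apply Rabs_def1; nra. Qed.

Lemma local_min_diag (beta r t : R) : 0 < beta -> 0 < t < 1 / 3 -> grad1 beta r t t = 0 ->
  0 < eig_sym beta t -> 0 < eig_anti beta t -> local_min_Xi (Fbeta beta r) t t.
Proof.
  intros Hb Ht Hc Hs Ha.
  set (eta := Rmin (1 / 2) (Rmin (2 / 9 * eig_sym beta t) (2 / 3 * eig_anti beta t))).
  assert (He : 0 < eta) by (unfold eta; repeat apply Rmin_glb_lt; lra).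
  assert (He1 : eta <= 1 / 2) by apply Rmin_l.
  assert (He2 : eta <= 2 / 9 * eig_sym beta t)
    by (eapply Rle_trans; [apply Rmin_r | apply Rmin_l]).
  assert (He3 : eta <= 2 / 3 * eig_anti beta t)
    by (eapply Rle_trans; [apply Rmin_r | apply Rmin_r]).
  split; [unfold in_Xi; lra|].
  exists (eta * t / 2). split; [nra|].
  intros y1 y2 _ Hd.
  destruct (Fpotts_near_diag beta r t eta y1 y2) as [Hlow _]; try lra.
  - apply (Rabs_lt_of_sum_sq _ (y2 - t)); nra.
  - apply (Rabs_lt_of_sum_sq _ (y1 - t)); nra.
  - assert (0 <= diag_form beta t (1 + eta) (y1 - t) (y2 - t)).
    { unfold diag_form. apply Rplus_le_le_0_compat;
        apply Rmult_le_pos; try apply pow2_ge_0; lra. }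
    rewrite !Fbeta_Fpotts. nra.
Qed.

Lemma local_max_diag (beta r t : R) : 0 < beta -> 0 < t < 1 / 3 -> grad1 beta r t t = 0 ->
  eig_sym beta t < 0 -> eig_anti beta t < 0 -> local_max_Xi (Fbeta beta r) t t.
Proof.
  intros Hb Ht Hc Hs Ha.
  set (eta := Rmin (1 / 2) (Rmin (- 2 / 9 * eig_sym beta t) (- 2 / 3 * eig_anti beta t))).
  assert (He : 0 < eta) by (unfold eta; repeat apply Rmin_glb_lt; lra).
  assert (He1 : eta <= 1 / 2) by apply Rmin_l.
  assert (He2 : eta <= - 2 / 9 * eig_sym beta t)
    by (eapply Rle_trans; [apply Rmin_r | apply Rmin_l]).
  assert (He3 : eta <= - 2 / 3 * eig_anti beta t)
    by (eapply Rle_trans; [apply Rmin_r | apply Rmin_r]).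
  split; [unfold in_Xi; lra|].
  exists (eta * t / 2). split; [nra|].
  intros y1 y2 _ Hd.
  destruct (Fpotts_near_diag beta r t eta y1 y2) as [_ Hup]; try lra.
  - apply (Rabs_lt_of_sum_sq _ (y2 - t)); nra.
  - apply (Rabs_lt_of_sum_sq _ (y1 - t)); nra.
  - assert (diag_form beta t (1 - eta) (y1 - t) (y2 - t) <= 0).
    { unfold diag_form.
      assert (0 <= (y1 - t + (y2 - t)) ^ 2) by apply pow2_ge_0.
      assert (0 <= (y1 - t - (y2 - t)) ^ 2) by apply pow2_ge_0.
      nra. }
    rewrite !Fbeta_Fpotts. nra.
Qed.

Definition ell (t : R) : R := ln ((1 - 2 * t) / t).

Lemma ell_pos (t : R) : 0 < t < 1 / 3 -> 0 < ell t.
Proof.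
  intros Ht. unfold ell. rewrite <- ln_1. apply ln_increasing; [lra|].
  apply Rmult_lt_reg_r with t; [lra|]. field_simplify; lra.
Qed.

Lemma ell_neg (t : R) : 1 / 3 < t < 1 / 2 -> ell t < 0.
Proof.
  intros Ht. unfold ell. rewrite <- ln_1. apply ln_increasing.
  - apply Rdiv_lt_0_compat; lra.
  - apply Rmult_lt_reg_r with t; [lra|]. field_simplify; lra.
Qed.

Lemma hfun_derive (c : R) : 0 < c < 1 / 2 -> is_derive hfun c (- 3 * (1 - 4 * c) * ell c).
Proof.
  intros Hc. assert (0 < (1 - 2 * c) / c) by (apply Rdiv_lt_0_compat; lra).
  unfold hfun, ell. auto_derive; [repeat split; lra|].
  replace ((1 + - (2 * c)) * / c) with ((1 - 2 * c) / c) by (unfold Rdiv; ring).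
  field. lra.
Qed.

Lemma hfun_third : hfun (1 / 3) = 0.
Proof.
  unfold hfun. replace ((1 - 2 * (1 / 3)) / (1 / 3)) with 1 by field.
  rewrite ln_1. field.
Qed.

Lemma hfun_decreasing (s t : R) : 0 < s -> s < t -> t <= 1 / 4 -> hfun t < hfun s.
Proof.
  intros Hs Hst Ht.
  apply (decr_of_derive_neg hfun (fun c => - 3 * (1 - 4 * c) * ell c)); [lra | |].
  - intros c Hc. apply hfun_derive. lra.
  - intros c Hc. pose proof (ell_pos c ltac:(lra)). nra.
Qed.

Lemma hfun_neg (t : R) : 1 / 4 <= t < 1 / 2 -> t <> 1 / 3 -> hfun t < 0.
Proof.
  intros Ht Ht3. rewrite <- hfun_third.
  destruct (Rlt_le_dec t (1 / 3)) as [Hlt|Hge].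
  - apply (incr_of_derive_pos hfun (fun c => - 3 * (1 - 4 * c) * ell c)); [lra | |].
    + intros c Hc. apply hfun_derive. lra.
    + intros c Hc. pose proof (ell_pos c ltac:(lra)). nra.
  - apply (decr_of_derive_neg hfun (fun c => - 3 * (1 - 4 * c) * ell c)); [lra | |].
    + intros c Hc. apply hfun_derive. lra.
    + intros c Hc. pose proof (ell_neg c ltac:(lra)). nra.
Qed.

Lemma m0_lt_quarter (r m : R) : 0 < r -> is_m0 r m -> m < 1 / 4.
Proof.
  intros Hr [[Hm Hmk] Hh]. unfold kr in Hmk.
  destruct (Rlt_le_dec m (1 / 4)) as [H|H]; [exact H|].
  pose proof (hfun_neg m ltac:(lra) ltac:(lra)). lra.
Qed.

Lemma ell_of_ffun (beta r t : R) : 1 - r - 3 * t <> 0 -> ffun r t = beta ->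
  ell t = 3 / 2 * beta * (1 - r - 3 * t).
Proof. intros Hd Hf. rewrite <- Hf. unfold ffun, ell. field. auto. Qed.

Lemma grad1_diag (beta r t : R) : 0 < t < 1 / 2 ->
  grad1 beta r t t = 3 / 2 * (1 - r - 3 * t) - / beta * ell t.
Proof.
  intros Ht. unfold grad1, ell.
  rewrite ln_div, (ln_mult 3 t), (ln_mult 3 (1 - t - t)) by lra.
  replace (1 - t - t) with (1 - 2 * t) by ring. generalize (/ beta). intro. field.
Qed.

Lemma grad1_diag_root (beta r t : R) : 0 < t < 1 / 2 -> beta <> 0 ->
  ell t = 3 / 2 * beta * (1 - r - 3 * t) -> grad1 beta r t t = 0.
Proof. intros Ht Hb Hl. rewrite grad1_diag, Hl by exact Ht. field. exact Hb. Qed.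

Lemma eig_sym_root (beta r t : R) : 0 < t < 1 / 2 -> beta <> 0 -> ell t <> 0 ->
  ell t = 3 / 2 * beta * (1 - r - 3 * t) ->
  eig_sym beta t = 3 / (2 * ell t * (t * (1 - 2 * t))) * (hfun t - r).
Proof.
  intros Ht Hb Hl0 Hl. unfold eig_sym.
  replace (hfun t) with (- 3 * t * (1 - 2 * t) * ell t - 3 * t + 1) by reflexivity.
  replace (- 3 * t * (1 - 2 * t) * ell t - 3 * t + 1 - r)
    with (- 3 * t * (1 - 2 * t) * ell t + 2 / 3 * / beta * ell t)
    by (rewrite Hl; field; exact Hb).
  field. repeat split; lra.
Qed.

Lemma eig_sym_le_eig_anti (beta t : R) : 0 < beta -> 0 < t <= 1 / 3 ->
  eig_sym beta t <= 3 * eig_anti beta t.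
Proof.
  intros Hb Ht. unfold eig_sym, eig_anti.
  rewrite Rinv_mult.
  enough (/ (1 - 2 * t) <= 3) by
    (pose proof (Rinv_0_lt_compat beta Hb); pose proof (Rinv_0_lt_compat t ltac:(lra));
     assert (0 < / beta * / t) by (apply Rmult_lt_0_compat; assumption); nra).
  replace 3 with (/ (1 / 3)) by field. apply Rinv_le_contravar; lra.
Qed.

Lemma eig_anti_factor (beta t : R) : 0 < beta -> 0 < t ->
  eig_anti beta t = 3 / (2 * t) * (2 / (3 * beta) - t).
Proof. intros Hb Ht. unfold eig_anti. field. lra. Qed.

Lemma eig_sym_between (beta a b c : R) : 0 < beta -> 0 < a -> a <= c <= b -> b < 1 / 2 ->
  eig_sym beta c <= Rmax (eig_sym beta a) (eig_sym beta b).
Proof.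
  intros Hb Ha Hc Hb2. unfold eig_sym.
  assert (Hib := Rinv_0_lt_compat beta Hb).
  assert (Hca : a * (1 - 2 * a) <= c * (1 - 2 * c) \/ b * (1 - 2 * b) <= c * (1 - 2 * c)).
  { destruct (Rle_dec (c + a) (1 / 2)); [left | right]; nra. }
  destruct Hca as [H|H]; [eapply Rle_trans; [|apply Rmax_l] | eapply Rle_trans; [|apply Rmax_r]];
    apply Rplus_le_compat_l, Rmult_le_compat_l; try lra;
    apply Rinv_le_contravar; nra.
Qed.

Definition rcrit (beta t : R) : R := 1 - 3 * t - 2 / (3 * beta) * ell t.

Lemma rcrit_root (beta r t : R) : beta <> 0 ->
  ell t = 3 / 2 * beta * (1 - r - 3 * t) -> rcrit beta t = r.
Proof. intros Hb Hl. unfold rcrit. rewrite Hl. field. exact Hb. Qed.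

Lemma rcrit_derive (beta c : R) : beta <> 0 -> 0 < c < 1 / 2 ->
  is_derive (rcrit beta) c (2 / 3 * eig_sym beta c).
Proof.
  intros Hb Hc. assert (0 < (1 - 2 * c) / c) by (apply Rdiv_lt_0_compat; lra).
  unfold rcrit, ell, eig_sym. auto_derive; [repeat split; lra|].
  replace ((1 + - (2 * c)) * / c) with ((1 - 2 * c) / c) by (unfold Rdiv; ring).
  field. repeat split; lra.
Qed.

Lemma rcrit_antitone (beta a b : R) : 0 < beta -> 0 < a -> a <= b -> b < 1 / 2 ->
  eig_sym beta a < 0 -> eig_sym beta b < 0 -> rcrit beta b <= rcrit beta a.
Proof.
  intros Hb Ha Hab Hb2 Hsa Hsb.
  destruct (Req_dec a b) as [<-|Hne]; [lra|].
  left. apply (decr_of_derive_neg (rcrit beta) (fun c => 2 / 3 * eig_sym beta c)); [lra | |].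
  - intros c Hc. apply rcrit_derive; lra.
  - intros c Hc.
    pose proof (eig_sym_between beta a b c Hb Ha ltac:(lra) Hb2).
    pose proof (Rmax_lub_lt _ _ _ Hsa Hsb). lra.
Qed.

Lemma rcrit_ustar (beta : R) : 2 < beta -> rcrit beta (2 / (3 * beta)) = r1 beta.
Proof.
  intros Hb. unfold rcrit, r1, ell.
  replace ((1 - 2 * (2 / (3 * beta))) / (2 / (3 * beta))) with (3 * beta / 2 - 2)
    by (field; lra).
  field. lra.
Qed.

Lemma eig_sym_ustar (beta : R) : 2 < beta -> eig_sym beta (2 / (3 * beta)) < 0.
Proof.
  intros Hb. unfold eig_sym.
  replace (/ beta * / (2 / (3 * beta) * (1 - 2 * (2 / (3 * beta)))))
    with (9 * / (6 - 8 / beta)) by (field; repeat split; try lra; field_simplify; lra).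
  assert (Hd : 2 < 6 - 8 / beta).
  { enough (8 / beta < 4) by lra.
    apply Rmult_lt_reg_r with beta; [lra|]. field_simplify; lra. }
  enough (/ (6 - 8 / beta) < / 2) by lra.
  apply Rinv_lt_contravar; lra.
Qed.

Lemma r1_pos (beta : R) : 2 < beta -> 0 < r1 beta.
Proof.
  intros Hb. unfold r1.
  pose proof (ln_lt_sub1 (3 * beta / 2 - 2) ltac:(lra) ltac:(lra)) as Hln.
  assert (Hk : 0 < 2 / (3 * beta)) by (apply Rdiv_lt_0_compat; lra).
  assert (2 / (3 * beta) * (3 * beta / 2 - 2 - 1) = 1 - 2 / beta) by (field; lra).
  nra.
Qed.

Lemma lower_root_local_min (beta r m p : R) : 0 < beta -> 0 < r -> is_m0 r m ->
  0 < p < m -> ffun r p = beta -> local_min_Xi (Fbeta beta r) p p.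
Proof.
  intros Hb Hr Hm Hp Hf.
  pose proof (m0_lt_quarter r m Hr Hm) as Hm4.
  destruct Hm as [[_ Hmk] Hh]. unfold kr in Hmk.
  assert (Hl : ell p = 3 / 2 * beta * (1 - r - 3 * p)) by (apply ell_of_ffun; lra).
  assert (Hl0 : 0 < ell p) by (apply ell_pos; lra).
  assert (Hhp : r < hfun p) by (rewrite <- Hh; apply hfun_decreasing; lra).
  assert (Hs : 0 < eig_sym beta p).
  { rewrite (eig_sym_root beta r p) by lra.
    apply Rmult_lt_0_compat; [|lra]. apply Rdiv_lt_0_compat; [lra|].
    apply Rmult_lt_0_compat; nra. }
  apply local_min_diag; try lra.
  - apply grad1_diag_root; lra.
  - pose proof (eig_sym_le_eig_anti beta p Hb ltac:(lra)). lra.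
Qed.

Lemma upper_root_saddle (beta r q : R) : 2 < beta -> 0 < r -> 1 / 3 < q < 1 / 2 ->
  ffun r q = beta -> saddle (Fbeta beta r) q q.
Proof.
  intros Hb Hr Hq Hf.
  assert (Hl : ell q = 3 / 2 * beta * (1 - r - 3 * q)) by (apply ell_of_ffun; lra).
  assert (Hl0 : ell q < 0) by (apply ell_neg; lra).
  assert (Hhq : hfun q < 0) by (apply hfun_neg; lra).
  assert (Hs : 0 < eig_sym beta q).
  { rewrite (eig_sym_root beta r q) by lra.
    replace (3 / (2 * ell q * (q * (1 - 2 * q))) * (hfun q - r))
      with (3 / (2 * - ell q * (q * (1 - 2 * q))) * (r - hfun q)) by (field; nra).
    apply Rmult_lt_0_compat; [|lra]. apply Rdiv_lt_0_compat; [lra|].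
    apply Rmult_lt_0_compat; nra. }
  assert (Ha : eig_anti beta q < 0).
  { rewrite eig_anti_factor by lra.
    assert (2 / (3 * beta) < 1 / 3) by (apply Rmult_lt_reg_r with (3 * beta); field_simplify; lra).
    assert (0 < 3 / (2 * q)) by (apply Rdiv_lt_0_compat; lra). nra. }
  apply saddle_diag; [lra | apply grad1_diag_root; lra | nra].
Qed.

Lemma middle_root_critical (beta r m u : R) : 0 < beta -> 0 < r -> is_m0 r m ->
  m < u < kr r -> ffun r u = beta ->
  0 < u < 1 / 3 /\ grad1 beta r u u = 0 /\ eig_sym beta u < 0 /\ rcrit beta u = r.
Proof.
  intros Hb Hr Hm Hu Hf.
  pose proof (m0_lt_quarter r m Hr Hm) as Hm4.
  destruct Hm as [[Hm0 _] Hh]. unfold kr in Hu.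
  assert (Hl : ell u = 3 / 2 * beta * (1 - r - 3 * u)) by (apply ell_of_ffun; lra).
  assert (Hl0 : 0 < ell u) by (apply ell_pos; lra).
  assert (Hhu : hfun u < r).
  { destruct (Rle_lt_dec u (1 / 4)).
    - rewrite <- Hh. apply hfun_decreasing; lra.
    - pose proof (hfun_neg u ltac:(lra) ltac:(lra)). lra. }
  split; [lra|]. split; [apply grad1_diag_root; lra|].
  split; [|apply rcrit_root; lra].
  rewrite (eig_sym_root beta r u) by lra.
  enough (0 < 3 / (2 * ell u * (u * (1 - 2 * u))) * (r - hfun u)) by lra.
  apply Rmult_lt_0_compat; [|lra]. apply Rdiv_lt_0_compat; [lra|].
  apply Rmult_lt_0_compat; nra.
Qed.

Lemma middle_root_local_max (beta r m u : R) : 2 < beta -> 0 < r < r1 beta -> is_m0 r m ->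
  m < u < kr r -> ffun r u = beta -> local_max_Xi (Fbeta beta r) u u.
Proof.
  intros Hb Hr Hm Hu Hf.
  destruct (middle_root_critical beta r m u ltac:(lra) ltac:(lra) Hm Hu Hf)
    as (Hu3 & Hc & Hs & Hru).
  apply local_max_diag; try lra.
  rewrite eig_anti_factor by lra.
  destruct (Rlt_le_dec (2 / (3 * beta)) u) as [Hlt|Hle].
  - assert (0 < 3 / (2 * u)) by (apply Rdiv_lt_0_compat; lra). nra.
  - pose proof (rcrit_antitone beta u (2 / (3 * beta)) ltac:(lra) ltac:(lra) Hle
      ltac:(apply Rmult_lt_reg_r with (3 * beta); field_simplify; lra) Hs (eig_sym_ustar beta Hb))
      as Hmono.
    rewrite rcrit_ustar in Hmono by lra. lra.
Qed.

Lemma middle_root_saddle (beta r m u : R) : 2 < beta -> r1 beta < r -> is_m0 r m ->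
  m < u < kr r -> ffun r u = beta -> saddle (Fbeta beta r) u u.
Proof.
  intros Hb Hr Hm Hu Hf.
  pose proof (r1_pos beta Hb) as Hr1.
  destruct (middle_root_critical beta r m u ltac:(lra) ltac:(lra) Hm Hu Hf)
    as (Hu3 & Hc & Hs & Hru).
  apply saddle_diag; [lra | exact Hc |].
  enough (0 < eig_anti beta u) by nra.
  rewrite eig_anti_factor by lra.
  destruct (Rlt_le_dec u (2 / (3 * beta))) as [Hlt|Hle].
  - assert (0 < 3 / (2 * u)) by (apply Rdiv_lt_0_compat; lra). nra.
  - pose proof (rcrit_antitone beta (2 / (3 * beta)) u
      ltac:(lra) ltac:(apply Rdiv_lt_0_compat; lra) Hle ltac:(lra) (eig_sym_ustar beta Hb) Hs)
      as Hmono.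
    rewrite rcrit_ustar in Hmono by lra. lra.
Qed.

Theorem lemma5p4 (beta r2 : R) (Hbeta : 2 < beta) (Hr2 : is_r2 beta r2) :
  (* (1) m_0^beta(r) = (p,p), p the solution of f_r = beta in (0, m_0(r)) *)
  (forall r m p, 0 < r < r2 -> is_m0 r m -> 0 < p < m -> ffun r p = beta ->
     local_min_Xi (Fbeta beta r) p p) /\
  (* (2) sigma_0^beta(r) = (q,q), q the solution of f_r = beta in (1/3, 1/2) *)
  (forall r q, 0 < r -> 1 / 3 < q < 1 / 2 -> ffun r q = beta ->
     saddle (Fbeta beta r) q q) /\
  (* (3) p^beta(r) = (u,u), u the solution of f_r = beta in (m_0(r), k_r) *)
  (forall r m u, 0 < r < r1 beta -> is_m0 r m -> m < u < kr r -> ffun r u = beta ->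
     local_max_Xi (Fbeta beta r) u u) /\
  (forall r m u, r1 beta < r < r2 -> is_m0 r m -> m < u < kr r -> ffun r u = beta ->
     saddle (Fbeta beta r) u u).
Proof.
  (* [r < r2] only guarantees that the roots exist; here they are given. *)
  split; [|split; [|split]].
  - intros r m p Hr. apply lower_root_local_min; lra.
  - intros r q Hr. now apply upper_root_saddle.
  - intros r m u Hr. now apply middle_root_local_max.
  - intros r m u Hr. apply middle_root_saddle; lra.
Qed.
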